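(* Let $M$ be a $*$-left Ehresmann monoid and $H\subseteq M$ a proper atomic subset. Then for every $h\in H$, $h\,\sigma\,1$ if and only if $h\in E$.
   Context: A $*$-left Ehresmann monoid is a monoid $M$ with unary operations $+,*$ such that $x^+x=x$, $(x^+y^+)^+=x^+y^+$, $x^+y^+=y^+x^+$, $(xy)^+=(xy^+)^+$, $xx^*=x$, $(x^* )^*=x^*$, $x^*y^*=y^*x^*$, $(xy^* )^*y^*=(xy^* )^*$, $(x^* )^+=x^*$, $(x^+)^*=x^+$. Its semilattice of projections is $E=\{a^+\}=\{a^*\}$; $\sigma$ is the least monoid congruence on $M$ containing $E\times E$. $H\subseteq M$ is atomic if: (H1) $E\subseteq H$; (H2) $h\in H,e\in E$ imply $he\in H$ and $(he)^*=h^*e$; (H3) if $h\in H$, $k\in H\setminus E$, $h^*\ge k^+$ then $hk\in H$ and $(hk)^*=k^*$; (H4) every $m\in M$ is $\sigma$-related to some $h\in H$; (H5) if $h,k,w\in H$, $hk\,\sigma\,w$ and $k^*=w^*$, then some $u\in H$ has $u\,\sigma\,h$ and $u^*\ge k^+$. $H$ is proper if for all $h,k\in H$: ($h^*=k^*$ and $h\,\sigma\,k$) iff $h=k$. *)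

Set Implicit Arguments.
Section Ehresmann.
Variables (M : Type) (mul : M -> M -> M) (one : M) (plus star : M -> M).

Definition is_star_left_ehresmann : Prop :=
  (forall x y z, mul x (mul y z) = mul (mul x y) z) /\
  (forall x, mul one x = x) /\
  (forall x, mul x one = x) /\
  (forall x, mul (plus x) x = x) /\
  (forall x y, plus (mul (plus x) (plus y)) = mul (plus x) (plus y)) /\
  (forall x y, mul (plus x) (plus y) = mul (plus y) (plus x)) /\
  (forall x y, plus (mul x y) = plus (mul x (plus y))) /\
  (forall x, mul x (star x) = x) /\
  (forall x, star (star x) = star x) /\
  (forall x y, mul (star x) (star y) = mul (star y) (star x)) /\
  (forall x y, mul (star (mul x (star y))) (star y) = star (mul x (star y))) /\
  (forall x, plus (star x) = star x) /\
  (forall x, star (plus x) = plus x).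

Definition E (x : M) : Prop := exists a, x = plus a.

Definition leE (e f : M) : Prop := e = mul e f.

Definition is_monoid_congruence (R : M -> M -> Prop) : Prop :=
  (forall x, R x x) /\
  (forall x y, R x y -> R y x) /\
  (forall x y z, R x y -> R y z -> R x z) /\
  (forall x y z, R x y -> R (mul z x) (mul z y)) /\
  (forall x y z, R x y -> R (mul x z) (mul y z)).

Definition sigma (x y : M) : Prop :=
  forall R : M -> M -> Prop, is_monoid_congruence R ->
    (forall e f, E e -> E f -> R e f) -> R x y.

Definition atomic (H : M -> Prop) : Prop :=
  (forall e, E e -> H e) /\
  (forall h e, H h -> E e ->
                 H (mul h e) /\ star (mul h e) = mul (star h) e) /\
  (forall h k, H h -> H k -> ~ E k -> leE (plus k) (star h) ->
                 H (mul h k) /\ star (mul h k) = star k) /\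
  (forall m, exists h, H h /\ sigma m h) /\
  (forall h k w, H h -> H k -> H w -> sigma (mul h k) w ->
                 star k = star w ->
                 exists u, H u /\ sigma u h /\ leE (plus k) (star u)).

Definition proper (H : M -> Prop) : Prop :=
  forall h k, H h -> H k -> ((star h = star k /\ sigma h k) <-> h = k).

End Ehresmann.


Set Implicit Arguments.

(* If h sigma 1, then h sigma h^* since 1 and h^* are projections; h and h^*
   both lie in H and have the same star, so properness forces h = h^*. *)

Section Sigma.
Variables (M : Type) (mul : M -> M -> M) (plus : M -> M).

Lemma sigma_trans (x y z : M) :
  sigma mul plus x y -> sigma mul plus y z -> sigma mul plus x z.
Proof.
  intros Hxy Hyz R HR HE.
  pose proof HR as [_ [_ [Htrans _]]].
  apply (Htrans x y z); [apply Hxy | apply Hyz]; assumption.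
Qed.

Lemma sigma_projections (e f : M) :
  E plus e -> E plus f -> sigma mul plus e f.
Proof. intros Ee Ef R _ HE. exact (HE e f Ee Ef). Qed.

End Sigma.

Section Projections.
Variables (M : Type) (mul : M -> M -> M) (one : M) (plus star : M -> M).
Hypothesis HM : is_star_left_ehresmann mul one plus star.

Lemma E_star (x : M) : E plus (star x).
Proof.
  destruct HM as [_ [_ [_ [_ [_ [_ [_ [_ [_ [_ [_ [Hplus_star _]]]]]]]]]]]].
  exists (star x). symmetry. apply Hplus_star.
Qed.

Lemma E_one : E plus one.
Proof.
  destruct HM as [_ [_ [Hmul1 [Hplus_mul _]]]].
  exists one. rewrite <- (Hmul1 (plus one)). symmetry. apply Hplus_mul.
Qed.

Lemma star_idem (x : M) : star (star x) = star x.
Proof.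
  destruct HM as [_ [_ [_ [_ [_ [_ [_ [_ [Hss _]]]]]]]]]. apply Hss.
Qed.

End Projections.

Theorem mainTheorem7 (M : Type) (mul : M -> M -> M) (one : M) (plus star : M -> M)
  (HM : is_star_left_ehresmann mul one plus star)
  (H : M -> Prop)
  (Hat : atomic mul plus star H)
  (Hpr : proper mul plus star H) :
  forall h, H h -> (sigma mul plus h one <-> E plus h).
Proof.
  destruct Hat as [H_projections _].
  intros h Hh. split.
  - intros Hsig.
    pose proof (E_star HM h) as Estar.
    assert (Hsig_star : sigma mul plus h (star h)).
    { apply (sigma_trans Hsig), sigma_projections; [exact (E_one HM) | exact Estar]. }
    assert (Hfix : h = star h).
    { apply (proj1 (Hpr h (star h) Hh (H_projections _ Estar))).
      split; [symmetry; apply (star_idem HM) | exact Hsig_star]. }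
    rewrite Hfix. exact Estar.
  - intros Eh. apply sigma_projections; [exact Eh | exact (E_one HM)].
Qed.
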